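(* Let $X$ be a real Banach space such that for every $\varepsilon>0$, every finite dimensional subspace $Z$ of $X$ and every $n\in\mathbb N$ there exists a linear operator $T:\ell_\infty^n\to X$ with $\|T\|\le1$ such that $\|z+T(y)\|\ge(1-\varepsilon)(\|z\|+\|y\|)$ for every $y\in\ell_\infty^n$ and every $z\in Z$. Then for every non-zero real Banach space $Y$ and every closed subspace $H$ of $L(Y,X)$ containing $F(Y,X)$, the norm of $H$ (the operator norm) is octahedral.
   Context: $L(Y,X)$ is the space of bounded linear operators from $Y$ to $X$ with the operator norm and $F(Y,X)$ is its subspace of finite-rank operators. A Banach space $W$ is octahedral if for every finite dimensional subspace $E$ of $W$ and every $\varepsilon>0$ there exists $y\in W$, $\|y\|=1$, with $\|x+\lambda y\|\ge(1-\varepsilon)(\|x\|+|\lambda|)$ for all $x\in E$, $\lambda\in\mathbb R$. *)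

From HB Require Import structures.
From mathcomp Require Import all_boot all_order all_algebra.
From mathcomp Require Import all_classical all_reals all_analysis.
Set Implicit Arguments. Unset Strict Implicit. Unset Printing Implicit Defensive.
Import Order.TTheory GRing.Theory Num.Theory.
Import numFieldNormedType.Exports.
Local Open Scope classical_set_scope.
Local Open Scope ring_scope.

Section Defs.
Variable R : realType.

Definition in_span (V : lmodType R) (s : seq V) (z : V) : Prop :=
  exists c : 'I_(size s) -> R, z = \sum_(i < size s) c i *: s`_i.

Definition is_linear (U V : lmodType R) (f : U -> V) : Prop :=
  forall (a : R) (x y : U), f (a *: x + y) = a *: f x + f y.

Definition bounded_op (U V : normedModType R) (f : U -> V) : Prop :=
  is_linear f /\ exists M : R, forall x : U, `|f x| <= M * `|x|.

Definition opnorm (U V : normedModType R) (f : U -> V) : R :=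
  sup [set `|f x| | x in [set x : U | `|x| <= 1]].

Definition finite_rank_op (U V : normedModType R) (f : U -> V) : Prop :=
  bounded_op f /\ exists s : seq V, forall x, in_span s (f x).

Definition closed_op_subspace (U V : normedModType R) (H : set (U -> V)) : Prop :=
  [/\ (forall f, H f -> bounded_op f),
      H (fun _ => 0),
      (forall f g, H f -> H g -> H (fun x => f x + g x)),
      (forall (a : R) f, H f -> H (fun x => a *: f x)) &
      (forall f, bounded_op f ->
         (forall e : R, 0 < e -> exists g, H g /\ opnorm (fun x => f x - g x) < e) ->
         H f)].

Definition in_op_span (U V : normedModType R) (s : seq (U -> V)) (f : U -> V) : Prop :=
  exists c : 'I_(size s) -> R, f = (fun x => \sum_(i < size s) c i *: (s`_i) x).

Definition octahedral_op_subspace (U V : normedModType R) (H : set (U -> V)) : Prop :=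
  forall (s : seq (U -> V)), (forall f, f \in s -> H f) ->
  forall eps : R, 0 < eps ->
  exists S : U -> V, [/\ H S, opnorm S = 1 &
    forall T, in_op_span s T -> forall lam : R,
      opnorm (fun x => T x + lam *: S x) >= (1 - eps) * (opnorm T + `|lam|)].

End Defs.

(* Let E be a finite dimensional subspace of H and d > 0.  Compactness of the unit
   sphere of E gives finitely many unit vectors y_1, ..., y_m of Y such that every
   T in E satisfies |T y_j| >= (1 - d) ||T|| for some j.  Hahn-Banach norming
   functionals of the y_j form a contraction Psi : Y -> l_oo^m with |Psi y_j| = 1.
   The hypothesis on X, applied to Z = span {T y_j}, yields Phi : l_oo^m -> X, and
   S = Phi o Psi / ||Phi o Psi|| is a finite rank norm-one operator of H.  Evaluating
   T + lam S at the right y_j gives ||T + lam S|| >= (1 - d) ((1 - d) ||T|| + |lam|). *)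

From HB Require Import structures.
From mathcomp Require Import all_boot all_order all_algebra.
From mathcomp Require Import all_classical all_reals all_analysis.
From mathcomp Require Import finmap ring lra.
Import Order.TTheory GRing.Theory Num.Theory.
Import numFieldNormedType.Exports.
Local Open Scope classical_set_scope.
Local Open Scope ring_scope.
Set Implicit Arguments. Unset Strict Implicit. Unset Printing Implicit Defensive.

Section Linearity.
Variables (R : realType) (U V W : lmodType R) (f : U -> V).
Hypothesis f_lin : is_linear f.

Lemma is_linear0 : f 0 = 0.
Proof.
have := f_lin 1 0 0; rewrite !scale1r addr0 => /(congr1 (fun v => v - f 0)).
by rewrite subrr addrK.
Qed.

Lemma is_linearZ a x : f (a *: x) = a *: f x.
Proof. by have := f_lin a x 0; rewrite !addr0 is_linear0 addr0. Qed.

Lemma is_linearB x y : f (x - y) = f x - f y.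
Proof. by have := f_lin (-1) y x; rewrite !scaleN1r addrC => ->; rewrite addrC. Qed.

Lemma is_linear_comp (g : W -> U) : is_linear g -> is_linear (f \o g).
Proof. by move=> g_lin a x y; rewrite /= g_lin f_lin. Qed.

End Linearity.

Section OperatorNorm.
Variables (R : realType) (U V : normedModType R).
Implicit Types (f : U -> V) (x : U).

Lemma opnorm_le_bound f M : 0 <= M -> (forall x, `|f x| <= M * `|x|) -> opnorm f <= M.
Proof.
move=> M0 hf; apply: ge_sup; first by exists `|f 0|; exists 0 => //; rewrite /= normr0.
move=> _ [x hx <-]; apply: le_trans (hf x) _.
by rewrite -[leRHS]mulr1 ler_wpM2l.
Qed.

Lemma bounded_op_has_sup f : bounded_op f ->
  has_sup [set `|f x| | x in [set x : U | `|x| <= 1]].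
Proof.
move=> [_ [M hM]]; split; first by exists `|f 0|; exists 0 => //; rewrite /= normr0.
exists `|M| => _ [x hx <-]; apply: le_trans (hM x) _.
apply: le_trans (ler_norm _) _; rewrite normrM.
by rewrite -[leRHS]mulr1 ler_wpM2l // normr_id.
Qed.

Lemma norm_le_opnorm f x : bounded_op f -> `|x| <= 1 -> `|f x| <= opnorm f.
Proof. by move=> bf hx; apply: sup_upper_bound; [exact: bounded_op_has_sup|exists x]. Qed.

Lemma opnorm_ge0 f : bounded_op f -> 0 <= opnorm f.
Proof. by move=> bf; apply: le_trans (@norm_le_opnorm f 0 bf _); rewrite ?normr0. Qed.

Lemma norm_le_opnormM f x : bounded_op f -> `|f x| <= opnorm f * `|x|.
Proof.
move=> bf; have [->|x0] := eqVneq x 0; first by rewrite (is_linear0 bf.1) !normr0 mulr0.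
have nx : 0 < `|x| by rewrite normr_gt0.
have := @norm_le_opnorm f (`|x|^-1 *: x) bf.
rewrite normrZ normfV normr_id mulVf ?gt_eqF // lexx => /(_ isT).
by rewrite (is_linearZ bf.1) normrZ normfV normr_id ler_pdivrMl // mulrC.
Qed.

Lemma opnorm_adherent f e : bounded_op f -> 0 < e ->
  exists2 x, `|x| <= 1 & opnorm f - e < `|f x|.
Proof.
by move=> bf e0; have [_ [x hx <-] h] := sup_adherent e0 (bounded_op_has_sup bf); exists x.
Qed.

Lemma opnorm_cst0 : opnorm (fun _ : U => 0 : V) = 0.
Proof.
apply/eqP; rewrite eq_le opnorm_le_bound //=; last by move=> x; rewrite normr0 mul0r.
apply: opnorm_ge0; split; first by move=> a x y; rewrite scaler0 addr0.
by exists 0 => x; rewrite normr0 mul0r.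
Qed.

Lemma bounded_opZ f a : bounded_op f -> bounded_op (fun x => a *: f x).
Proof.
move=> [f_lin [M hM]]; split; first by move=> r x y; rewrite f_lin scalerDr !scalerA mulrC.
by exists (`|a| * M) => x; rewrite normrZ -mulrA ler_wpM2l.
Qed.

Lemma opnormZ f a : bounded_op f -> opnorm (fun x => a *: f x) = `|a| * opnorm f.
Proof.
move=> bf; apply/eqP; rewrite eq_le; apply/andP; split.
  apply: opnorm_le_bound; first by rewrite mulr_ge0 // opnorm_ge0.
  by move=> x; rewrite normrZ -mulrA ler_wpM2l // norm_le_opnormM.
have [->|a0] := eqVneq a 0; first by rewrite normr0 mul0r; exact: opnorm_ge0 (bounded_opZ 0 bf).
rewrite -ler_pdivlMl ?normr_gt0 //; apply: opnorm_le_bound.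
  by rewrite mulr_ge0 ?invr_ge0 //; exact: opnorm_ge0 (bounded_opZ a bf).
move=> x; have -> : f x = a^-1 *: (a *: f x) by rewrite scalerA mulVf // scale1r.
rewrite normrZ normfV -mulrA ler_wpM2l ?invr_ge0 //.
exact: norm_le_opnormM (bounded_opZ a bf).
Qed.

Lemma opnorm_gt0 f x : bounded_op f -> f x != 0 -> 0 < opnorm f.
Proof.
move=> bf fx0; rewrite lt_def opnorm_ge0 // andbT.
apply: contraNneq fx0 => f0; rewrite -normr_le0.
by have := norm_le_opnormM x bf; rewrite f0 mul0r.
Qed.

Lemma opnorm_nearly_attained f d : bounded_op f -> 0 < d -> d < 1 -> 0 < opnorm f ->
  exists2 y, `|y| = 1 & (1 - d) * opnorm f < `|f y|.
Proof.
move=> bf d0 d1 f_pos; have [x x1 fx] := opnorm_adherent bf (mulr_gt0 d0 f_pos).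
rewrite -[X in X - _]mul1r -mulrBl in fx.
have fx0 : 0 < `|f x| by apply: le_lt_trans fx; rewrite mulr_ge0 ?subr_ge0 ?ltW.
have x0 : x != 0 by apply: contraTneq fx0 => ->; rewrite (is_linear0 bf.1) normr0 ltxx.
exists (`|x|^-1 *: x); first by rewrite normrZ normfV normr_id mulVf // normr_eq0.
rewrite (is_linearZ bf.1) normrZ normfV normr_id; apply: lt_le_trans fx _.
by rewrite ler_peMl // invf_ge1 ?normr_gt0.
Qed.

Lemma bounded_opD f g : bounded_op f -> bounded_op g -> bounded_op (fun x => f x + g x).
Proof.
move=> [f_lin [M fM]] [g_lin [N gN]]; split.
  by move=> a x y; rewrite f_lin g_lin scalerDr addrACA.
by exists (M + N) => x; rewrite mulrDl; apply: le_trans (ler_normD _ _) (lerD (fM x) (gN x)).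
Qed.

End OperatorNorm.

Lemma lipschitz_continuous (R : realType) (V : normedModType R) (g : V -> R) K : 0 <= K ->
  (forall c d, `|g c - g d| <= K * `|c - d|) -> continuous g.
Proof.
move=> K0 h x; apply/(@cvgrPdist_lt _ _ _ (nbhs x)) => e e0; apply/(@nbhs_normP R _ x).
have K1 : 0 < K + 1 by rewrite ltr_wpDl.
exists (e / (K + 1)); first by rewrite /= divr_gt0.
move=> y /= hy; apply: le_lt_trans (h x y) _.
apply: (@le_lt_trans _ _ ((K + 1) * `|x - y|)); first by rewrite ler_wpM2r // lerDl.
by rewrite mulrC -ltr_pdivlMr.
Qed.

Section RowVectors.
Variable R : realType.

Lemma is_linear_row_sum_delta (V : lmodType R) k (h : 'rV[R]_k -> V) (v : 'rV[R]_k) :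
  is_linear h ->
  h v = \sum_(i < k) v 0 i *: h 'e_i.
Proof.
move=> h_lin; rewrite {1}(row_sum_delta v).
elim/big_rec2: _ => [|i y1 y2 _ IH]; first exact: is_linear0.
by rewrite h_lin IH.
Qed.

Lemma mx_norm_coord k (c : 'rV[R]_k) i : `|c 0 i| <= `|c|.
Proof.
have /mapP[j Hj ->] : `|c 0 i| \in [seq `|c x.1 x.2| | x : 'I_1 * 'I_k].
  by apply/mapP; exists (0, i) => //=; rewrite mem_enum.
by rewrite [leRHS]mx_normrE; apply/bigmax_geP; right; exists j.
Qed.

Lemma mx_norm_le_coord k (v : 'rV[R]_k) M : 0 <= M -> (forall i, `|v 0 i| <= M) -> `|v| <= M.
Proof.
move=> M0 h; rewrite [leLHS]mx_normrE; apply/bigmax_leP; split => // [[i j]] _ /=.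
by rewrite (ord1 i).
Qed.

Lemma is_linear_rV_bounded (V : normedModType R) k (f : 'rV[R]_k -> V) :
  is_linear f -> bounded_op f.
Proof.
move=> f_lin; split => //; exists (\sum_(i < k) `|f 'e_i|) => v.
rewrite (is_linear_row_sum_delta v f_lin); apply: le_trans (ler_norm_sum _ _ _) _.
rewrite mulr_suml; apply: ler_sum => i _; rewrite normrZ mulrC ler_wpM2l //.
exact: mx_norm_coord.
Qed.

Lemma compact_unit_sphere_rV k : compact [set c : 'rV[R]_k | `|c| = 1].
Proof.
apply: bounded_closed_compact.
  by exists 1; split; [exact: num_real|move=> M M1 c /= ->; exact: ltW].
apply: (@preimage_closed _ _ (fun c : 'rV[R]_k => `|c|) [set 1]) => //.
by move=> x _; exact: norm_continuous.
Qed.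

End RowVectors.

Section NormingFunctional.
Variables (R : realType) (Y : normedModType R) (y0 : Y).

(* Partial norming functionals for y0, encoded by their graphs so that Zorn's lemma
   can be applied to the inclusion order. *)
Definition norming_graph (G : set (Y * R)) :=
  [/\ (forall x a b, G (x, a) -> G (x, b) -> a = b),
      (forall r x a x' a', G (x, a) -> G (x', a') -> G (r *: x + x', r * a + a')),
      (forall x a, G (x, a) -> a <= `|x|) & G (y0, `|y0|)].

Lemma norming_graph0 G : norming_graph G -> G (0, 0).
Proof.
move=> [_ G_lin _ Gy0]; have := G_lin (-1) _ _ _ _ Gy0 Gy0.
by rewrite scaleN1r mulN1r !addNr.
Qed.

Lemma norming_graphZ G r x a : norming_graph G -> G (x, a) -> G (r *: x, r * a).
Proof.
move=> gG Gx; have [_ G_lin _ _] := gG.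
by have := G_lin r _ _ _ _ Gx (norming_graph0 gG); rewrite !addr0.
Qed.

Lemma norming_graphD G x a x' a' : norming_graph G -> G (x, a) -> G (x', a') ->
  G (x + x', a + a').
Proof. by move=> [_ G_lin _ _] Gx Gx'; have := G_lin 1 _ _ _ _ Gx Gx'; rewrite scale1r mul1r. Qed.

Lemma norming_graph_norm G x a : norming_graph G -> G (x, a) -> `|a| <= `|x|.
Proof.
move=> gG Gx; have [_ _ G_dom _] := gG.
rewrite ler_norml G_dom // andbT lerNl.
by have := G_dom _ _ (norming_graphZ (-1) gG Gx); rewrite scaleN1r mulN1r normrN.
Qed.

Lemma norming_graph_line : norming_graph [set p | exists r : R, p = (r *: y0, r * `|y0|)].
Proof.
split.
- move=> x a b [r [-> ->]] [r' [e ->]].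
  have [->|y00] := eqVneq y0 0; first by rewrite normr0 !mulr0.
  move/eqP: e; rewrite -subr_eq0 -scalerBl scaler_eq0 (negbTE y00) orbF subr_eq0.
  by move/eqP ->.
- move=> r x a x' a' [s [-> ->]] [s' [-> ->]].
  by exists (r * s + s'); rewrite scalerDl scalerA mulrDl mulrA.
- by move=> x a [r [-> ->]]; rewrite normrZ ler_wpM2r // ler_norm.
- by exists 1; rewrite scale1r mul1r.
Qed.

(* The empty set is admitted so that the empty chain has an upper bound. *)
Lemma norming_graph_chain (F : set (set (Y * R))) :
  F `<=` (fun G => G = set0 \/ norming_graph G) -> total_on F subset ->
  (\bigcup_(G in F) G) = set0 \/ norming_graph (\bigcup_(G in F) G).
Proof.
move=> FP tot.
have [[G0 FG0 [p0 G0p]]|none] := pselect (exists2 G, F G & exists p, G p); last first.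
  left; apply/seteqP; split=> // p [G FG Gp]; apply: none; exists G => //; by exists p.
have graph_of G q : F G -> G q -> norming_graph G.
  by move=> FG Gq; case: (FP _ FG) => // G0e; rewrite G0e in Gq.
have common p q : (\bigcup_(G in F) G) p -> (\bigcup_(G in F) G) q ->
    exists G, [/\ F G, norming_graph G, G p & G q].
  move=> [G1 FG1 G1p] [G2 FG2 G2q]; case: (tot _ _ FG1 FG2) => sub.
    by exists G2; split => //; [exact: graph_of FG2 G2q|exact: sub].
  by exists G1; split => //; [exact: graph_of FG1 G1p|exact: sub].
right; split.
- move=> x a b ha hb; have [G [_ [G_fun _ _ _] Ga Gb]] := common _ _ ha hb.
  exact: G_fun Ga Gb.
- move=> r x a x' a' ha hb; have [G [FG [_ G_lin _ _] Ga Gb]] := common _ _ ha hb.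
  by exists G => //; exact: G_lin.
- move=> x a [G FG Ga]; have [_ _ G_dom _] := graph_of _ _ FG Ga; exact: G_dom.
- by exists G0 => //; have [] := graph_of _ _ FG0 G0p.
Qed.

Section OneStepExtension.
Variables (A : set (Y * R)) (x : Y).
Hypothesis gA : norming_graph A.

(* The admissible values t at x are sandwiched between these two bounds,
   which are compatible because b + c <= |u + v| on the graph. *)
Lemma norming_graph_extension_value : exists t,
  (forall u b, A (u, b) -> b - `|u - x| <= t) /\
  (forall v c, A (v, c) -> t <= `|v + x| - c).
Proof.
have [_ _ A_dom _] := gA.
have bounds_compatible u b v c : A (u, b) -> A (v, c) -> b - `|u - x| <= `|v + x| - c.
  move=> Au Av; have := A_dom _ _ (norming_graphD gA Au Av).
  rewrite lerBrDl addrA lerBlDr => h.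
  rewrite addrC; apply: le_trans h _; rewrite [leRHS]addrC.
  have -> : u + v = (u - x) + (v + x) by rewrite addrCA subrK addrC.
  exact: ler_normD.
pose E := [set p.2 - `|p.1 - x| | p in A].
have hE : has_sup E.
  split; first by exists (0 - `|0 - x|), (0, 0) => //; exact: norming_graph0.
  exists (`|0 + x| - 0) => _ [[u b] Au <-]; exact: bounds_compatible Au (norming_graph0 gA).
exists (sup E); split.
  by move=> u b Au; apply: sup_upper_bound => //; exists (u, b).
move=> v c Av; apply: ge_sup; first by case: hE.
by move=> _ [[u b] Au <-]; exact: bounds_compatible Au Av.
Qed.

Definition graph_extension (t : R) : set (Y * R) :=
  [set p | exists u b r, A (u, b) /\ p = (u + r *: x, b + r * t)].

Lemma sub_graph_extension t : A `<=` graph_extension t.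
Proof. by move=> [u b] Au; exists u, b, 0; rewrite scale0r mul0r !addr0. Qed.

Lemma graph_extension_at t : graph_extension t (x, t).
Proof.
exists 0, 0, 1; split; first exact: norming_graph0.
by rewrite add0r scale1r add0r mul1r.
Qed.

Hypothesis x_undef : forall a, ~ A (x, a).

Lemma undefined_independent u b r : A (u, b) -> u + r *: x = 0 -> r = 0.
Proof.
move=> Au e; apply: contrapT => /eqP r0; apply: x_undef (- r^-1 * b) _.
have := norming_graphZ (- r^-1) gA Au.
have -> : u = - (r *: x) by apply/eqP; rewrite -subr_eq0 opprK e.
by rewrite scalerN scaleNr opprK scalerA mulVf // scale1r.
Qed.

Lemma norming_graph_extension t :
  (forall u b, A (u, b) -> b - `|u - x| <= t) ->
  (forall v c, A (v, c) -> t <= `|v + x| - c) ->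
  norming_graph (graph_extension t).
Proof.
move=> t_ge t_le; have [A_fun A_lin A_dom Ay0] := gA; split.
- move=> _ a1 a2 [u [b [r [Au [-> ->]]]]] [u' [b' [r' [Au' [e ->]]]]].
  have rr : r = r'.
    apply/eqP; rewrite -subr_eq0; apply/eqP.
    apply: (undefined_independent (norming_graphD gA Au (norming_graphZ (-1) gA Au'))).
    by rewrite scaleN1r scalerBl addrACA e -opprD subrr.
  move: e; rewrite rr => /addIr uu; rewrite uu in Au.
  by rewrite (A_fun _ _ _ Au Au').
- move=> s _ _ _ _ [u [b [r [Au [-> ->]]]]] [u' [b' [r' [Au' [-> ->]]]]].
  exists (s *: u + u'), (s * b + b'), (s * r + r'); split; first exact: A_lin.
  congr (_, _); first by rewrite scalerDr !scalerA scalerDl addrACA.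
  by rewrite mulrDr mulrDl !mulrA addrACA.
- move=> _ _ [u [b [r [Au [-> ->]]]]].
  have [r0|r0|<-] := ltgtP 0 r; last by rewrite scale0r mul0r !addr0; exact: A_dom.
  + have := t_le _ _ (norming_graphZ r^-1 gA Au).
    have -> : r^-1 *: u + x = r^-1 *: (u + r *: x).
      by rewrite scalerDr scalerA mulVf ?gt_eqF // scale1r.
    rewrite normrZ gtr0_norm ?invr_gt0 // -mulrBr -ler_pdivrMl ?invr_gt0 //.
    by rewrite invrK lerBrDl addrC.
  + have := t_ge _ _ (norming_graphZ (- r)^-1 gA Au).
    have -> : (- r)^-1 *: u - x = (- r)^-1 *: (u + r *: x).
      by rewrite scalerDr scalerA invrN mulNr mulVf ?ltr0_neq0 // scaleN1r.
    rewrite normrZ gtr0_norm ?invr_gt0 ?oppr_gt0 // -mulrBr.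
    rewrite -ler_pdivlMl ?invr_gt0 ?oppr_gt0 // invrK mulNr lerBlDr.
    by move=> h; rewrite -lerBrDr addrC.
- exact: sub_graph_extension.
Qed.

End OneStepExtension.

Theorem norming_functional : exists phi : Y -> R,
  [/\ (forall a x y, phi (a *: x + y) = a * phi x + phi y),
      (forall x, `|phi x| <= `|x|) & phi y0 = `|y0|].
Proof.
have [A [A_graph A_max]] := Zorn_bigcup norming_graph_chain.
have gA : norming_graph A.
  case: A_graph => // A0; exfalso; apply: (A_max _ _ (or_intror norming_graph_line)).
  rewrite A0; split => // /(_ (y0, `|y0|)) h.
  by have := h (ex_intro _ 1 _); rewrite scale1r mul1r => /(_ erefl).
have [A_fun A_lin _ Ay0] := gA.
have A_total x : exists a, A (x, a).
  apply: contrapT => x_undef; have {}x_undef a : ~ A (x, a) by move=> Ax; apply: x_undef; exists a.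
  have [t [t_ge t_le]] := norming_graph_extension_value x gA.
  apply: (A_max (graph_extension A x t)); last first.
    by right; exact: norming_graph_extension.
  split; first exact: sub_graph_extension.
  by move=> /(_ (x, t) (graph_extension_at x gA t)); exact: x_undef.
pose phi x := xget 0 [set a | A (x, a)].
have A_phi x : A (x, phi x) by exact: (xgetPex 0 (A_total x)).
exists phi; split.
- by move=> r x y; apply: A_fun (A_phi _) _; exact: A_lin.
- by move=> x; exact: norming_graph_norm (A_phi x).
- exact: A_fun (A_phi y0) Ay0.
Qed.

End NormingFunctional.

Lemma norming_functionals_rV (R : realType) (Y : normedModType R) (ys : seq Y) :
  exists Psi : Y -> 'rV[R]_(size ys), [/\ is_linear Psi,
    forall x, `|Psi x| <= `|x| & forall y, y \in ys -> `|y| <= `|Psi y|].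
Proof.
pose phi (y : Y) : Y -> R := proj1_sig (cid (norming_functional y)).
have phiP (y : Y) : [/\ forall a x z, phi y (a *: x + z) = a * phi y x + phi y z,
    forall x, `|phi y x| <= `|x| & phi y y = `|y|].
  exact: proj2_sig (cid (norming_functional y)).
exists (fun x => \row_(i < size ys) phi ys`_i x); split.
- by move=> a x z; apply/rowP => i; rewrite !mxE; have [-> _ _] := phiP ys`_i.
- move=> x; apply: mx_norm_le_coord => // i; rewrite mxE.
  by have [_ -> _] := phiP ys`_i.
- move=> y y_in; have i_lt : (index y ys < size ys)%N by rewrite index_mem.
  apply: le_trans (mx_norm_coord _ (Ordinal i_lt)); rewrite mxE /= nth_index //.
  by have [_ _ ->] := phiP y; rewrite normr_id.
Qed.

Section LinearFamily.
Variables (R : realType) (Y X : normedModType R) (k : nat) (L : 'rV[R]_k -> Y -> X).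
Hypotheses (L_lin : forall x, is_linear (L^~ x)) (L_bounded : forall c, bounded_op (L c)).

Definition family_bound := \sum_(i < k) opnorm (L 'e_i).

Lemma family_bound_ge0 : 0 <= family_bound.
Proof. by apply: sumr_ge0 => i _; exact: opnorm_ge0. Qed.

Lemma opnorm_family_le c : opnorm (L c) <= `|c| * family_bound.
Proof.
apply: opnorm_le_bound; first by rewrite mulr_ge0 // family_bound_ge0.
move=> x; rewrite (is_linear_row_sum_delta c (L_lin x)).
apply: le_trans (ler_norm_sum _ _ _) _.
rewrite /family_bound mulr_sumr mulr_suml; apply: ler_sum => i _.
rewrite normrZ -mulrA; apply: ler_pM => //; first exact: mx_norm_coord.
exact: norm_le_opnormM.
Qed.

Lemma opnorm_family_lipschitz c d :
  `|opnorm (L c) - opnorm (L d)| <= `|c - d| * family_bound.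
Proof.
have half c' d' : opnorm (L c') - opnorm (L d') <= `|c' - d'| * family_bound.
  rewrite lerBlDr; apply: le_trans (lerD (opnorm_family_le (c' - d')) (lexx _)).
  apply: opnorm_le_bound; first by rewrite addr_ge0 // opnorm_ge0.
  move=> x; have -> : L c' x = L (c' - d') x + L d' x.
    by rewrite (is_linearB (L_lin x)) subrK.
  rewrite mulrDl; apply: le_trans (ler_normD _ _) _.
  by apply: lerD; exact: norm_le_opnormM.
rewrite ler_norml half andbT lerNl opprB; apply: le_trans (half d c) _.
by rewrite -normrN opprB.
Qed.

Lemma norming_gap_continuous y e : continuous (fun c => `|L c y| - e * opnorm (L c)).
Proof.
apply: (@lipschitz_continuous _ _ _ ((`|y| + `|e|) * family_bound)).
  by rewrite mulr_ge0 ?addr_ge0 // family_bound_ge0.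
move=> c c'.
have -> : `|L c y| - e * opnorm (L c) - (`|L c' y| - e * opnorm (L c')) =
    (`|L c y| - `|L c' y|) + (- e) * (opnorm (L c) - opnorm (L c')) by ring.
have -> : (`|y| + `|e|) * family_bound * `|c - c'| =
    `|y| * (`|c - c'| * family_bound) + `|e| * (`|c - c'| * family_bound) by ring.
apply: le_trans (ler_normD _ _) _; apply: lerD.
  apply: le_trans (ler_dist_dist _ _) _.
  rewrite -(is_linearB (L_lin y)); apply: le_trans (norm_le_opnormM _ (L_bounded _)) _.
  by rewrite mulrC ler_wpM2l // opnorm_family_le.
by rewrite normrM normrN ler_wpM2l // opnorm_family_lipschitz.
Qed.

Lemma finite_norming_set_inj d : 0 < d -> d < 1 ->
  (forall c, (forall x, L c x = 0) -> c = 0) ->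
  exists ys : seq Y, (forall y, y \in ys -> `|y| = 1) /\
    (forall c, 0 < opnorm (L c) -> exists2 y, y \in ys & (1 - d) * opnorm (L c) <= `|L c y|).
Proof.
move=> d0 d1 L_inj; pose g y c := `|L c y| - (1 - d) * opnorm (L c).
have sphere_cover : [set c : 'rV[R]_k | `|c| = 1] `<=`
    cover [set y : Y | `|y| = 1] (fun y => g y @^-1` [set r | 0 < r]).
  move=> c c1; have c0 : c != 0 by apply: contra_eqN c1 => /eqP ->; rewrite normr0 eq_sym oner_eq0.
  have [x Lcx] : exists x, L c x != 0.
    apply: contrapT => L0; move/eqP: c0; apply; apply: L_inj => x.
    by apply/eqP; apply: contrapT => Lcx; apply: L0; exists x; apply/negP.
  have [y y1 hy] := opnorm_nearly_attained (L_bounded c) d0 d1 (opnorm_gt0 (L_bounded c) Lcx).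
  by exists y => //; rewrite /= /g subr_gt0.
have gy_open y : open (g y @^-1` [set r | 0 < r]).
  exact: open_comp (fun c _ => @norming_gap_continuous y (1 - d) c) (@open_gt _ 0).
have := @compact_unit_sphere_rV R k; rewrite compact_cover.
move=> /(_ Y _ _ (fun y _ => gy_open y) sphere_cover) [ys sys ys_cover].
exists ys; split=> [y /sys|c Lc_pos]; first by rewrite in_setE.
have c0 : c != 0.
  by apply: contraTneq Lc_pos => ->; rewrite (_ : L 0 = fun=> 0) ?opnorm_cst0 ?ltxx //;
    apply: funext => x; exact: (is_linear0 (L_lin x)).
have nc : 0 < `|c| by rewrite normr_gt0.
have unit_c : `|(`|c|^-1 *: c)| = 1 by rewrite normrZ normfV normr_id mulVf // gt_eqF.
have [y yin gy_pos] := ys_cover _ unit_c; exists y => //; move: gy_pos; rewrite /= /g subr_gt0.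
have -> : L (`|c|^-1 *: c) = fun x => `|c|^-1 *: L c x.
  by apply: funext => x; exact: (is_linearZ (L_lin x)).
rewrite (opnormZ _ (L_bounded c)) normrZ normfV normr_id mulrCA ltr_pM2l ?invr_gt0 //.
exact: ltW.
Qed.

End LinearFamily.

Section FiniteNormingSet.
Variables (R : realType) (Y X : normedModType R).

(* Induction on the number of parameters: a family with a kernel is reparametrised by
   one parameter fewer, by cancelling a coordinate on which a kernel vector is nonzero. *)
Lemma finite_norming_set_pos k (L : 'rV[R]_k -> Y -> X) d :
  (forall x, is_linear (L^~ x)) -> (forall c, bounded_op (L c)) -> 0 < d -> d < 1 ->
  exists ys : seq Y, (forall y, y \in ys -> `|y| = 1) /\
    (forall c, 0 < opnorm (L c) -> exists2 y, y \in ys & (1 - d) * opnorm (L c) <= `|L c y|).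
Proof.
move=> + + d0 d1; elim: k L => [|k IH] L L_lin L_bounded.
  by apply: finite_norming_set_inj => // c _; exact: thinmx0.
have [L_inj|] := pselect (forall c, (forall x, L c x = 0) -> c = 0).
  exact: finite_norming_set_inj.
move=> /existsNP[c0 /not_implyP[L_c0 c00]].
have [j c0j] : exists j, c0 0 j != 0.
  apply: contrapT => /forallNP c0_eq0; apply: c00; apply/rowP => i.
  by rewrite mxE; apply/eqP; apply: contrapT => /negP; exact: c0_eq0.
pose ins (e : 'rV[R]_k) : 'rV[R]_k.+1 :=
  \row_i (if unlift j i is Some i' then e 0 i' else 0).
have ins_lin : is_linear ins.
  move=> a e e'; apply/rowP => i; rewrite !mxE.
  by case: unlift => [i'|]; rewrite ?mxE // mulr0 addr0.
have [ys [ys1 ys_norming]] := IH (fun e => L (ins e))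
  (fun x => is_linear_comp (L_lin x) ins_lin) (fun e => L_bounded _).
exists ys; split => // c Lc_pos.
pose c' := c - (c 0 j / c0 0 j) *: c0.
have L_c' : L c' = L c.
  apply: funext => x; rewrite /c' addrC -scaleNr.
  by rewrite (L_lin x) L_c0 scaler0 add0r.
have c'_ins : c' = ins (\row_(i' < k) c' 0 (lift j i')).
  apply/rowP => i; rewrite [in RHS]mxE; case: unliftP => [i' ->|->]; first by rewrite [RHS]mxE.
  by rewrite !mxE divfK // subrr.
by have := ys_norming (\row_i' c' 0 (lift j i')); rewrite -c'_ins L_c'; apply.
Qed.

Lemma finite_norming_set k (L : 'rV[R]_k -> Y -> X) d :
  (forall x, is_linear (L^~ x)) -> (forall c, bounded_op (L c)) -> 0 < d -> d < 1 ->
  (exists y : Y, y != 0) ->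
  exists ys : seq Y, (exists y, y \in ys) /\ (forall y, y \in ys -> `|y| = 1) /\
    (forall c, exists2 y, y \in ys & (1 - d) * opnorm (L c) <= `|L c y|).
Proof.
move=> L_lin L_bounded d0 d1 [y0 y00].
have [ys [ys1 ys_norming]] := finite_norming_set_pos L_lin L_bounded d0 d1.
pose u0 := `|y0|^-1 *: y0.
exists (u0 :: ys); split; first by exists u0; rewrite mem_head.
split=> [y|c].
  by rewrite inE => /predU1P[->|/ys1//]; rewrite normrZ normfV normr_id mulVf ?normr_eq0.
have [Lc_pos|Lc_npos] := ltP 0 (opnorm (L c)).
  by have [y yin hy] := ys_norming c Lc_pos; exists y; rewrite // inE yin orbT.
exists u0; first exact: mem_head.
by apply: le_trans (normr_ge0 _); rewrite mulr_ge0_le0 // subr_ge0 ltW.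
Qed.

End FiniteNormingSet.

Section Span.
Variables (R : realType) (V : lmodType R) (zs : seq V).

Lemma in_span0 : in_span zs 0.
Proof. by exists (fun=> 0); rewrite big1 // => i _; rewrite scale0r. Qed.

Lemma in_spanZD a z z' : in_span zs z -> in_span zs z' -> in_span zs (a *: z + z').
Proof.
move=> [c ->] [c' ->]; exists (fun i => a * c i + c' i).
by rewrite scaler_sumr -big_split; apply: eq_bigr => i _; rewrite scalerDl scalerA.
Qed.

Lemma in_spanZ a z : in_span zs z -> in_span zs (a *: z).
Proof. by move=> hz; have := in_spanZD a hz in_span0; rewrite addr0. Qed.

Lemma in_span_mem z : z \in zs -> in_span zs z.
Proof.
move=> z_in; have z_lt : (index z zs < size zs)%N by rewrite index_mem.
exists (fun i => (i == Ordinal z_lt)%:R).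
rewrite (bigD1 (Ordinal z_lt)) //= big1 => [|i /negbTE ->]; last by rewrite scale0r.
by rewrite eqxx scale1r addr0 nth_index.
Qed.

Lemma in_span_sum n (F : 'I_n -> V) : (forall i, in_span zs (F i)) -> in_span zs (\sum_(i < n) F i).
Proof.
move=> hF; elim/big_rec: _ => [|i y _ IH]; first exact: in_span0.
by have := in_spanZD 1 (hF i) IH; rewrite scale1r.
Qed.

End Span.

Lemma in_span_rV_image (R : realType) (V : lmodType R) m (f : 'rV[R]_m -> V) v :
  is_linear f -> in_span [seq f 'e_i | i <- enum 'I_m] (f v).
Proof.
move=> f_lin; rewrite (is_linear_row_sum_delta v f_lin); apply: in_span_sum => i.
by apply/in_spanZ/in_span_mem; rewrite map_f // mem_enum.
Qed.

Section ClosedOpSubspace.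
Variables (R : realType) (Y X : normedModType R) (H : set (Y -> X)).
Hypothesis H_closed : closed_op_subspace H.

Lemma closed_op_subspace_sum n (F : 'I_n -> Y -> X) :
  (forall i, H (F i)) -> H (fun x => \sum_(i < n) F i x).
Proof.
have [_ H0 H_add _ _] := H_closed; elim: n F => [|n IH] F H_F.
  by rewrite (_ : (fun x => _) = fun _ => 0) //; apply: funext => x; rewrite big_ord0.
rewrite (_ : (fun x => _) = fun x => \sum_(i < n) F (widen_ord (leqnSn n) i) x + F ord_max x).
  by apply: H_add; [exact: IH|exact: H_F].
by apply: funext => x; rewrite big_ord_recr.
Qed.

Lemma closed_op_subspace_span s T :
  (forall f, f \in s -> H f) -> in_op_span s T -> H T.
Proof.
have [_ _ _ H_scale _] := H_closed; move=> s_H [c ->].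
by apply: closed_op_subspace_sum => i; apply/H_scale/s_H/mem_nth.
Qed.

End ClosedOpSubspace.

Lemma in_span_op_span_values (R : realType) (Y X : normedModType R) (s : seq (Y -> X))
  (ys : seq Y) T y :
  in_op_span s T -> y \in ys -> in_span [seq f y | f <- s, y <- ys] (T y).
Proof.
move=> [c ->] y_in; apply: in_span_sum => i.
by apply/in_spanZ/in_span_mem/allpairs_f => //; exact: mem_nth.
Qed.

Lemma op_span_finite_norming_set (R : realType) (Y X : normedModType R) (H : set (Y -> X))
  (s : seq (Y -> X)) d :
  closed_op_subspace H -> (forall f, f \in s -> H f) -> 0 < d -> d < 1 ->
  (exists y : Y, y != 0) ->
  exists ys : seq Y, (exists y, y \in ys) /\ (forall y, y \in ys -> `|y| = 1) /\
    (forall T, in_op_span s T -> exists2 y, y \in ys & (1 - d) * opnorm T <= `|T y|).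
Proof.
move=> H_closed s_H d0 d1 Y_nz; have [H_bounded _ _ _ _] := H_closed.
pose L (c : 'rV[R]_(size s)) x := \sum_(i < size s) c 0 i *: (s`_i) x.
have L_lin x : is_linear (L^~ x).
  move=> a c c'; rewrite /L scaler_sumr -big_split; apply: eq_bigr => i _.
  by rewrite !mxE scalerDl scalerA.
have L_bounded c : bounded_op (L c).
  by apply/H_bounded/(closed_op_subspace_span H_closed s_H); exists (c 0).
have [ys [ys_nz [ys_unit ys_norming]]] := finite_norming_set L_lin L_bounded d0 d1 Y_nz.
exists ys; split; [done|split; [done|move=> _ [c ->]]].
have L_row : L (\row_i c i) = fun x => \sum_(i < size s) c i *: s`_i x.
  by apply: funext => x; apply: eq_bigr => i _; rewrite mxE.
by have [y y_in] := ys_norming (\row_i c i); rewrite L_row; exists y.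
Qed.

Section OctahedralDirection.
Variables (R : realType) (Y X : normedModType R) (m : nat) (zs : seq X) (d : R).
Variables (Psi : Y -> 'rV[R]_m) (Phi : 'rV[R]_m -> X).
Hypotheses (Psi_lin : is_linear Psi) (Psi_le : forall x, `|Psi x| <= `|x|).
Hypotheses (Phi_lin : is_linear Phi) (Phi_le1 : opnorm Phi <= 1).
Hypothesis Phi_oct : forall v z, in_span zs z -> (1 - d) * (`|z| + `|v|) <= `|z + Phi v|.
Hypothesis d1 : d < 1.

Let PhiPsi x := Phi (Psi x).

Lemma norm_Phi_le v : `|Phi v| <= `|v|.
Proof.
apply: le_trans (norm_le_opnormM _ (is_linear_rV_bounded Phi_lin)) _.
by rewrite ler_piMl.
Qed.

Lemma PhiPsi_bounded : bounded_op PhiPsi.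
Proof.
split; first exact: is_linear_comp.
by exists 1 => x; rewrite mul1r; apply: le_trans (norm_Phi_le _) (Psi_le _).
Qed.

Lemma opnorm_PhiPsi_le1 : opnorm PhiPsi <= 1.
Proof.
by apply: opnorm_le_bound => // x; rewrite mul1r; apply: le_trans (norm_Phi_le _) (Psi_le _).
Qed.

Lemma opnorm_PhiPsi_ge u : `|u| <= 1 -> 1 <= `|Psi u| -> 1 - d <= opnorm PhiPsi.
Proof.
move=> u1 Psi_u; apply: le_trans _ (norm_le_opnorm PhiPsi_bounded u1).
have := Phi_oct (Psi u) (in_span0 zs); rewrite add0r normr0 add0r.
by apply: le_trans; rewrite ler_peMr // subr_ge0 ltW.
Qed.

Definition octahedral_direction x := (opnorm PhiPsi)^-1 *: Phi (Psi x).

Variable u : Y.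
Hypotheses (u_le1 : `|u| <= 1) (Psi_u : 1 <= `|Psi u|).

Lemma opnorm_PhiPsi_gt0 : 0 < opnorm PhiPsi.
Proof. by apply: lt_le_trans (opnorm_PhiPsi_ge u_le1 Psi_u); rewrite subr_gt0. Qed.

Lemma opnorm_octahedral_direction : opnorm octahedral_direction = 1.
Proof.
have PhiPsi_pos := opnorm_PhiPsi_gt0.
by rewrite (opnormZ _ PhiPsi_bounded) normfV gtr0_norm // mulVf // gt_eqF.
Qed.

Lemma octahedral_direction_finite_rank : finite_rank_op octahedral_direction.
Proof.
split; first exact: bounded_opZ PhiPsi_bounded.
by exists [seq Phi 'e_i | i <- enum 'I_m] => x; apply/in_spanZ/in_span_rV_image.
Qed.

Lemma octahedral_direction_lower T y lam : bounded_op T -> `|y| <= 1 -> 1 <= `|Psi y| ->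
  in_span zs (T y) ->
  (1 - d) * (`|T y| + `|lam|) <= opnorm (fun x => T x + lam *: octahedral_direction x).
Proof.
move=> T_bounded y1 Psi_y Ty_span; set a := (opnorm PhiPsi)^-1.
have a1 : 1 <= a by rewrite invf_ge1 ?opnorm_PhiPsi_gt0 ?opnorm_PhiPsi_le1.
have S_bounded : bounded_op (fun x => T x + lam *: octahedral_direction x).
  exact/(bounded_opD T_bounded)/bounded_opZ/bounded_opZ/PhiPsi_bounded.
apply: le_trans _ (norm_le_opnorm S_bounded y1).
rewrite /octahedral_direction -/a scalerA -(is_linearZ Phi_lin).
apply: le_trans _ (Phi_oct _ Ty_span); apply: ler_wpM2l; first by rewrite subr_ge0 ltW.
rewrite lerD2l normrZ normrM (ger0_norm (le_trans ler01 a1)) -mulrA ler_peMr //.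
by rewrite -[1]mulr1 ler_pM.
Qed.

End OctahedralDirection.

Lemma two_step_loss_le (R : realFieldType) (N A P l d eps : R) :
  0 <= N -> 0 <= l -> 0 <= d -> d <= 1 -> d <= eps / 2 ->
  (1 - d) * N <= A -> (1 - d) * (A + l) <= P -> (1 - eps) * (N + l) <= P.
Proof.
move=> N0 l0 d0 d1 d_eps NA AP; apply: le_trans AP.
have : (1 - d) * ((1 - d) * N + l) <= (1 - d) * (A + l) by rewrite ler_wpM2l ?subr_ge0 ?lerD2r.
by apply: le_trans; nra.
Qed.

Unset Implicit Arguments.

Theorem theorem3p6 (R : realType) (X : completeNormedModType R)
  (hX : forall (eps : R), 0 < eps -> forall (zs : seq X) (n : nat),
     exists T : 'rV[R]_n -> X,
       [/\ is_linear T, opnorm T <= 1 &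
         forall (y : 'rV[R]_n) (z : X), in_span zs z ->
           `|z + T y| >= (1 - eps) * (`|z| + `|y|)]) :
  forall (Y : completeNormedModType R), (exists y : Y, y != 0) ->
  forall H : set (Y -> X), closed_op_subspace H ->
    (forall f : Y -> X, finite_rank_op f -> H f) ->
    octahedral_op_subspace H.
Proof.
move=> Y Y_nz H H_closed H_finite s s_H eps eps0.
have [H_bounded _ _ _ _] := H_closed.
pose d := Num.min (eps / 2) (1 / 2).
have d0 : 0 < d by rewrite lt_min !divr_gt0.
have d1 : d < 1 by rewrite gt_min; apply/orP; right; lra.
have d_eps : d <= eps / 2 by rewrite ge_min lexx.
have [ys [[u u_in] [ys_unit ys_norming]]] := op_span_finite_norming_set H_closed s_H d0 d1 Y_nz.
have [Psi [Psi_lin Psi_le Psi_ge]] := norming_functionals_rV ys.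
have unit_normed y : y \in ys -> `|y| <= 1 /\ 1 <= `|Psi y|.
  by move=> y_in; rewrite -(ys_unit y y_in); split; [exact: lexx|exact: Psi_ge].
have [Phi [Phi_lin Phi_le1 Phi_oct]] := hX d d0 [seq f y | f <- s, y <- ys] (size ys).
have [u_le1 Psi_u] := unit_normed u u_in.
exists (octahedral_direction Psi Phi); split.
- exact/H_finite/(octahedral_direction_finite_rank Psi_lin Psi_le Phi_lin Phi_le1).
- exact: (opnorm_octahedral_direction Psi_lin Psi_le Phi_lin Phi_le1 Phi_oct d1 u_le1 Psi_u).
move=> T T_span lam; have T_bounded := H_bounded _ (closed_op_subspace_span H_closed s_H T_span).
have [y y_in Ty_norming] := ys_norming T T_span; have [y_le1 Psi_y] := unit_normed y y_in.
apply: (two_step_loss_le (opnorm_ge0 T_bounded) (normr_ge0 lam) (ltW d0) (ltW d1) d_eps Ty_norming).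
exact: (octahedral_direction_lower Psi_lin Psi_le Phi_lin Phi_le1 Phi_oct d1 u_le1 Psi_u
  lam T_bounded y_le1 Psi_y (in_span_op_span_values T_span y_in)).
Qed.
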